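(* Let $X$ and $\Lambda$ be nonempty sets, $f: X\to\mathbb{R}$, and $(f_\lambda)_{\lambda\in\Lambda}$ a family of real-valued functions on $X$ such that $(f_\lambda(x))_{\lambda\in\Lambda}\in\ell^\infty(\Lambda)$ for every $x\in X$ and the feasible set $X_0:=\{x\in X:\ \sup_{\lambda\in\Lambda}f_\lambda(x)\le0\}$ is nonempty. Assume $x^0\in X_0$ is an optimal solution, i.e. $f(x^0)=\inf_{x\in X_0}f(x)$, and that the Slater condition holds: there exists $x^1\in X$ with $\sup_{\lambda\in\Lambda}f_\lambda(x^1)<0$. Then there exists $\Phi_0\in\ell^\infty(\Lambda)^*_+$ such that $(x^0,\Phi_0)$ is a saddle point of the Lagrangian $\mathbf{L}$ if and only if the family $(f_\lambda)_{\lambda\in\Lambda}\cup(f-f(x^0))$ is infsup-convex on $X$.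
   Context: $\ell^\infty(\Lambda)$ is the Banach space of bounded real functions on $\Lambda$ (sup-norm), $\ell^\infty(\Lambda)^*_+$ the cone of positive continuous linear functionals on it ($\Phi(\varphi)\ge0$ whenever $\varphi\ge0$). The Lagrangian $\mathbf{L}: X\times\ell^\infty(\Lambda)^*_+\to\mathbb{R}$ is $\mathbf{L}(x,\Phi):=f(x)+\Phi((f_\lambda(x))_{\lambda\in\Lambda})$; $(x^0,\Phi_0)$ is a saddle point if $\mathbf{L}(x^0,\Phi)\le\mathbf{L}(x^0,\Phi_0)\le\mathbf{L}(x,\Phi_0)$ for all $(x,\Phi)\in X\times\ell^\infty(\Lambda)^*_+$. The family $(f_\lambda)_{\lambda\in\Lambda}\cup(f-f(x^0))$ is the family indexed by $\Lambda\cup\{\mu\}$ ($\mu\notin\Lambda$) whose $\mu$-th member is $f-f(x^0)$. With $\Delta_m:=\{\mathbf t\in\mathbb{R}^m: t_j\ge0,\sum t_j=1\}$, a family $(g_i)_{i\in I}$ of real functions on $X$ is infsup-convex on $X$ if for all $m\ge1$, $\mathbf{t}\in\Delta_m$, $x_1,\dots,x_m\in X$: $\inf_{x\in X}\sup_{i\in I}g_i(x)\le\sup_{i\in I}\sum_{j=1}^m t_j g_i(x_j)$. *)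

From HB Require Import structures.
From mathcomp Require Import all_boot all_order all_algebra.
From mathcomp Require Import all_classical all_reals all_analysis.
Set Implicit Arguments. Unset Strict Implicit. Unset Printing Implicit Defensive.
Import Order.TTheory GRing.Theory Num.Theory.
Local Open Scope classical_set_scope.
Local Open Scope ring_scope.

Section Defs.
Context {R : realType}.

Definition linfty {L : Type} (phi : L -> R) : Prop :=
  exists M : R, forall l, `|phi l| <= M.

Definition supnorm {L : Type} (phi : L -> R) : R :=
  sup [set `|phi l| | l in [set: L]].

(* positive continuous linear functionals on l^oo(L); a functional is a map
   (L -> R) -> R whose values off l^oo(L) are irrelevant *)
Definition linfty_dual_pos {L : Type} (Phi : (L -> R) -> R) : Prop :=
  (forall (a : R) (phi psi : L -> R), linfty phi -> linfty psi ->
     Phi (fun l => a * phi l + psi l) = a * Phi phi + Phi psi) /\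
  (forall phi : L -> R, linfty phi -> forall eps : R, 0 < eps ->
     exists2 delta : R, 0 < delta & forall psi : L -> R, linfty psi ->
       supnorm (fun l => psi l - phi l) < delta -> `|Phi psi - Phi phi| < eps) /\
  (forall phi : L -> R, linfty phi -> (forall l, 0 <= phi l) -> 0 <= Phi phi).

Definition lagrangian {X L : Type} (f : X -> R) (F : L -> X -> R)
  (x : X) (Phi : (L -> R) -> R) : R := f x + Phi (fun l => F l x).

Definition saddle_point {X L : Type} (f : X -> R) (F : L -> X -> R)
  (x0 : X) (Phi0 : (L -> R) -> R) : Prop :=
  forall (x : X) (Phi : (L -> R) -> R), linfty_dual_pos Phi ->
    lagrangian f F x0 Phi <= lagrangian f F x0 Phi0 /\
    lagrangian f F x0 Phi0 <= lagrangian f F x Phi0.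

Definition infsup_convex {X I : Type} (g : I -> X -> R) : Prop :=
  forall (m : nat) (t : 'I_m -> R) (xs : 'I_m -> X), (0 < m)%N ->
    (forall j, 0 <= t j) -> \sum_(j < m) t j = 1 ->
    (ereal_inf [set ereal_sup [set (g i x)%:E | i in [set: I]] | x in [set: X]]
      <= ereal_sup [set (\sum_(j < m) t j * g i (xs j))%:E | i in [set: I]])%E.

(* the family (f_l)_l U (f - f x0), indexed by option L, None = mu *)
Definition add_obj {X L : Type} (F : L -> X -> R) (f : X -> R) (x0 : X)
  : option L -> X -> R :=
  fun i x => match i with Some l => F l x | None => f x - f x0 end.

End Defs.

(* Both sides are equivalent to the existence of a Lagrange multiplier: a
   positive functional Phi0 on l^oo(Lambda) with f x0 <= f x + Phi0 ((f_l x)_l)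
   for all x.  Testing a saddle point against Phi = 0 gives Phi0 ((f_l x0)_l) >= 0,
   hence a multiplier; conversely feasibility of x0 turns a multiplier into a
   saddle point.  A multiplier rules out convex combinations of the family
   G = (f_l)_l U (f - f x0) with negative supremum, while x0 itself gives
   inf_x sup G <= 0: this is infsup-convexity.

   In the other direction, optimality of x0 gives inf_x sup G >= 0, so
   infsup-convexity says that no nonnegative combination of the G(x) is
   uniformly negative.  The gauge
     p(phi) = inf {r | phi + sum_k s_k G(x_k) <= r for some s >= 0}
   is then a real sublinear functional on l^oo(Lambda U {mu}), and a linear
   Lam <= p (Hahn-Banach, via a minimal sublinear functional below p) is a
   positive mean with Lam (G x) >= 0 for every x.  Slater's point forces Lam to
   charge mu; dividing the restriction of Lam to l^oo(Lambda) by that charge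
   gives the multiplier.  Neither X nor Lambda needs to be nonempty. *)

From HB Require Import structures.
From mathcomp Require Import all_boot all_order all_algebra.
From mathcomp Require Import all_classical all_reals all_analysis.
From mathcomp Require Import ring lra.
Import Order.TTheory GRing.Theory Num.Theory.
Local Open Scope classical_set_scope.
Local Open Scope ring_scope.
Set Implicit Arguments. Unset Strict Implicit.

Section InfArith.
Variable R : realType.

Lemma inf_le_inf_add (A B C : set R) : A !=set0 -> B !=set0 ->
  (forall a b, A a -> B b -> inf C <= a + b) -> inf C <= inf A + inf B.
Proof.
move=> A0 B0 leC.
suff : inf C - inf A <= inf B by rewrite lerBlDl.
apply: lb_le_inf B0 _ => b Bb.
rewrite lerBlDl -lerBlDr; apply: lb_le_inf A0 _ => a Aa.
by rewrite lerBlDr; exact: leC.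
Qed.

Lemma inf_le_inf_scale (A C : set R) (c : R) : 0 < c -> A !=set0 ->
  (forall a, A a -> inf C <= c * a) -> inf C <= c * inf A.
Proof.
move=> c_gt0 A0 leC.
rewrite -ler_pdivrMl //; apply: lb_le_inf A0 _ => a Aa.
by rewrite ler_pdivrMl //; exact: leC.
Qed.

End InfArith.

Definition subspace_on (R : realType) (V : lmodType R) (B : set V) :=
  B 0 /\ forall (a : R) x y, B x -> B y -> B (a *: x + y).

Section DominatedLinear.
Variables (R : realType) (V : lmodType R) (B : set V).
Hypothesis subB : subspace_on B.
Let B0 := subB.1.
Let B_comb := subB.2.

Lemma subspace_onD x y : B x -> B y -> B (x + y).
Proof. by move=> Bx By; have := B_comb 1 Bx By; rewrite scale1r. Qed.

Lemma subspace_onZ (a : R) x : B x -> B (a *: x).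
Proof. by move=> Bx; have := B_comb a Bx B0; rewrite addr0. Qed.

Lemma subspace_onN x : B x -> B (- x).
Proof. by move=> Bx; have := subspace_onZ (-1) Bx; rewrite scaleN1r. Qed.

Lemma subspace_onB x y : B x -> B y -> B (x - y).
Proof. by move=> Bx By; apply: subspace_onD => //; exact: subspace_onN. Qed.

Lemma subspace_on_sum (I : Type) (r : seq I) (t : I -> R) (h : I -> V) :
  (forall j, B (h j)) -> B (\sum_(j <- r) t j *: h j).
Proof.
move=> Bh; elim: r => [|j r IH]; first by rewrite big_nil.
by rewrite big_cons; exact: B_comb.
Qed.

Definition sublinear_on (q : V -> R) :=
  [/\ q 0 <= 0,
      forall x y, B x -> B y -> q (x + y) <= q x + q y &
      forall (a : R) x, 0 < a -> B x -> q (a *: x) <= a * q x].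

Definition linear_on (g : V -> R) :=
  forall (a : R) x y, B x -> B y -> g (a *: x + y) = a * g x + g y.

Definition dominated_on (q p : V -> R) := forall x, B x -> q x <= p x.

Section LinearOn.
Variable g : V -> R.
Hypothesis g_lin : linear_on g.

Lemma linear_on0 : g 0 = 0.
Proof. by have := g_lin 1 B0 B0; rewrite scale1r addr0 mul1r; lra. Qed.

Lemma linear_onZ (a : R) x : B x -> g (a *: x) = a * g x.
Proof. by move=> Bx; have := g_lin a Bx B0; rewrite !addr0 linear_on0 addr0. Qed.

Lemma linear_onN x : B x -> g (- x) = - g x.
Proof. by move=> Bx; rewrite -scaleN1r linear_onZ // mulN1r. Qed.

Lemma linear_onD x y : B x -> B y -> g (x + y) = g x + g y.
Proof. by move=> Bx By; have := g_lin 1 Bx By; rewrite scale1r mul1r. Qed.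

Lemma linear_onB x y : B x -> B y -> g (x - y) = g x - g y.
Proof. by move=> Bx By; rewrite linear_onD ?linear_onN //; exact: subspace_onN. Qed.

Lemma linear_on_sum (I : Type) (r : seq I) (t : I -> R) (h : I -> V) :
  (forall j, B (h j)) -> g (\sum_(j <- r) t j *: h j) = \sum_(j <- r) t j * g (h j).
Proof.
move=> Bh; elim: r => [|j r IH]; first by rewrite !big_nil linear_on0.
by rewrite !big_cons g_lin ?IH //; exact: subspace_on_sum.
Qed.

End LinearOn.

Section SublinearOn.
Variable q : V -> R.
Hypothesis q_sub : sublinear_on q.

Lemma sublinear_on0 : q 0 = 0.
Proof.
have [q0_le0 qD _] := q_sub; have := qD 0 0 B0 B0.
by rewrite addr0; lra.
Qed.

Lemma sublinear_onZ (a : R) x : 0 <= a -> B x -> q (a *: x) = a * q x.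
Proof.
rewrite le_eqVlt => /predU1P[<-|a_gt0] Bx; first by rewrite scale0r mul0r sublinear_on0.
have [_ _ qZ] := q_sub; apply/eqP; rewrite eq_le qZ //=.
have := qZ a^-1 (a *: x); rewrite invr_gt0 => /(_ a_gt0 (subspace_onZ a Bx)).
rewrite scalerA mulVf ?gt_eqF // scale1r.
by rewrite -(ler_pM2l a_gt0) mulrA mulfV ?gt_eqF // mul1r.
Qed.

Lemma sublinear_on_opp x : B x -> 0 <= q x + q (- x).
Proof.
move=> Bx; rewrite -sublinear_on0 -(subrr x).
by have [_ qD _] := q_sub; apply: qD => //; exact: subspace_onN.
Qed.

Lemma sublinear_odd_linear : (forall x, B x -> q (- x) = - q x) -> linear_on q.
Proof.
move=> qN; have [_ qD _] := q_sub.
have qD_eq x y : B x -> B y -> q (x + y) = q x + q y.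
  move=> Bx By; apply/eqP; rewrite eq_le qD //=.
  have := qD (x + y) (- y) (subspace_onD Bx By) (subspace_onN By).
  by rewrite addrK qN // lerBrDr.
have qZ (a : R) x : B x -> q (a *: x) = a * q x.
  move=> Bx; have [a_ge0|a_lt0] := leP 0 a; first exact: sublinear_onZ.
  rewrite -[a]opprK scaleNr qN; last by apply: subspace_onZ.
  by rewrite sublinear_onZ ?oppr_ge0 ?(ltW a_lt0) //; ring.
by move=> a x y Bx By; rewrite qD_eq ?qZ //; exact: subspace_onZ.
Qed.

End SublinearOn.

Section Shift.
Variables (q : V -> R) (a : V).
Hypotheses (q_sub : sublinear_on q) (Ba : B a).

Let shift_set x := [set q (x + c *: a) - c * q a | c in [set c : R | 0 <= c]].

Definition shift_inf x := inf (shift_set x).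

Let shift_set_neq0 x : shift_set x !=set0.
Proof. by exists (q x), 0 => //=; rewrite scale0r addr0 mul0r subr0. Qed.

Lemma shift_inf_le x c : B x -> 0 <= c -> shift_inf x <= q (x + c *: a) - c * q a.
Proof.
move=> Bx c_ge0; apply: ge_inf; last by exists c.
exists (- q (- x)) => _ [d d_ge0 <-].
have [_ qD _] := q_sub.
have := qD _ _ (subspace_onD Bx (subspace_onZ d Ba)) (subspace_onN Bx).
by rewrite addrC addKr sublinear_onZ //; lra.
Qed.

Lemma shift_inf_dominated : dominated_on shift_inf q.
Proof.
move=> x Bx; apply: le_trans (shift_inf_le Bx (lexx 0)) _.
by rewrite scale0r addr0 mul0r subr0.
Qed.

Lemma shift_inf_sublinear : sublinear_on shift_inf.
Proof.
have [q0_le0 qD qZ] := q_sub.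
split.
- exact: le_trans (shift_inf_dominated B0) q0_le0.
- move=> x y Bx By.
  apply: (inf_le_inf_add (shift_set_neq0 x) (shift_set_neq0 y)).
  move=> _ _ [c c_ge0 <-] [d d_ge0 <-].
  apply: le_trans (shift_inf_le (subspace_onD Bx By) (addr_ge0 c_ge0 d_ge0)) _.
  rewrite scalerDl addrACA.
  have := qD _ _ (subspace_onD Bx (subspace_onZ c Ba))
    (subspace_onD By (subspace_onZ d Ba)).
  lra.
- move=> b x b_gt0 Bx.
  apply: (inf_le_inf_scale b_gt0 (shift_set_neq0 x)) => _ [c c_ge0 <-].
  have bc_ge0 : 0 <= b * c := mulr_ge0 (ltW b_gt0) c_ge0.
  apply: le_trans (shift_inf_le (subspace_onZ b Bx) bc_ge0) _.
  rewrite -scalerA -scalerDr.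
  have := qZ b _ b_gt0 (subspace_onD Bx (subspace_onZ c Ba)).
  lra.
Qed.

End Shift.

(* A minimal sublinear functional is odd: shifting it along [a] stays below it,
   hence agrees with it, which forces [q (- a) <= - q a]. *)
Lemma minimal_sublinear_linear q : sublinear_on q ->
  (forall q', sublinear_on q' -> dominated_on q' q -> dominated_on q q') ->
  linear_on q.
Proof.
move=> q_sub q_min; apply: sublinear_odd_linear => // a Ba.
apply/eqP; rewrite eq_le; apply/andP; split; last first.
  by have := sublinear_on_opp q_sub Ba; lra.
have Ba' := subspace_onN Ba.
have := q_min _ (shift_inf_sublinear q_sub Ba) (shift_inf_dominated q_sub Ba) _ Ba'.
move=> /le_trans; apply.
apply: le_trans (shift_inf_le q_sub Ba Ba' ler01) _.
by rewrite scale1r addNr sublinear_on0 // mul1r sub0r.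
Qed.

Section ChainInf.
Variables (p : V -> R) (M : set (V -> R)).
Hypotheses (M_neq0 : M !=set0) (M_sub : forall q, M q -> sublinear_on q)
  (M_dom : forall q, M q -> dominated_on q p)
  (M_total : total_on M (fun q1 q2 => dominated_on q1 q2)).

Definition chain_inf x := inf [set q x | q in M].

Lemma chain_inf_le q x : M q -> B x -> chain_inf x <= q x.
Proof.
move=> Mq Bx; apply: ge_inf; last by exists q.
exists (- p (- x)) => _ [q' Mq' <-].
have := sublinear_on_opp (M_sub Mq') Bx; have := M_dom Mq' (subspace_onN Bx); lra.
Qed.

Lemma chain_inf_sublinear : sublinear_on chain_inf.
Proof.
have [q0 Mq0] := M_neq0.
have img_neq0 x : [set q x | q in M] !=set0 by exists (q0 x), q0.
split.
- by apply: le_trans (chain_inf_le Mq0 B0) _; have [] := M_sub Mq0.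
- move=> x y Bx By.
  apply: (inf_le_inf_add (img_neq0 x) (img_neq0 y)) => _ _ [q1 Mq1 <-] [q2 Mq2 <-].
  have [[_ q1D _] [_ q2D _]] := (M_sub Mq1, M_sub Mq2).
  have [le12|le21] := M_total Mq1 Mq2.
  + apply: le_trans (chain_inf_le Mq1 (subspace_onD Bx By)) _.
    by apply: le_trans (q1D _ _ Bx By) _; rewrite lerD2l le12.
  + apply: le_trans (chain_inf_le Mq2 (subspace_onD Bx By)) _.
    by apply: le_trans (q2D _ _ Bx By) _; rewrite lerD2r le21.
- move=> a x a_gt0 Bx; apply: (inf_le_inf_scale a_gt0 (img_neq0 x)) => _ [q Mq <-].
  apply: le_trans (chain_inf_le Mq (subspace_onZ a Bx)) _.
  by have [_ _ qZ] := M_sub Mq; exact: qZ.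
Qed.

End ChainInf.

(* Hahn-Banach: Zorn's lemma yields a minimal sublinear functional below [p]. *)
Theorem sublinear_dominated_linear p : sublinear_on p ->
  exists g, linear_on g /\ dominated_on g p.
Proof.
move=> p_sub.
pose T := {q : V -> R | sublinear_on q /\ dominated_on q p}.
have pT : sublinear_on p /\ dominated_on p p by split => // x _.
pose above (s t : T) := `[< dominated_on (sval t) (sval s) >].
have [t t_min] : exists t : T, premaximal above t.
  apply: (ZL_preorder (exist _ p pT)).
  - by move=> s; apply/asboolP => x _.
  - move=> r s t /asboolP rs /asboolP st; apply/asboolP => x Bx.
    exact: le_trans (st x Bx) (rs x Bx).
  - move=> A A_total.
    pose M := [set sval s | s in A] `|` [set p].
    have M_sub q : M q -> sublinear_on q.
      by case=> [[s _ <-]|->] //; case: (svalP s).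
    have M_dom q : M q -> dominated_on q p.
      by case=> [[s _ <-]|-> x _] //; case: (svalP s).
    have M_total : total_on M (fun q1 q2 => dominated_on q1 q2).
      move=> _ _ [[s1 As1 <-]|->] [[s2 As2 <-]|->].
      + by case: (A_total _ _ As1 As2) => /asboolP; [right|left].
      + by left; apply: M_dom; left; exists s1.
      + by right; apply: M_dom; left; exists s2.
      + by left => x _.
    have M_neq0 : M !=set0 by exists p; right.
    have m_sub := chain_inf_sublinear M_neq0 M_sub M_dom M_total.
    have m_dom : dominated_on (chain_inf M) p.
      by move=> x Bx; apply: (chain_inf_le M_sub M_dom _ Bx); right.
    exists (exist _ (chain_inf M) (conj m_sub m_dom)) => s As.
    by apply/asboolP => x Bx; apply: (chain_inf_le M_sub M_dom _ Bx); left; exists s.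
have [t_sub t_dom] := svalP t.
exists (sval t); split => //; apply: minimal_sublinear_linear => // q q_sub q_t.
have qT : sublinear_on q /\ dominated_on q p.
  by split => // x Bx; exact: le_trans (q_t x Bx) (t_dom x Bx).
by have /asboolP := t_min (exist _ q qT) (asboolT q_t).
Qed.

End DominatedLinear.

Section LinftyFunctionals.
Variables (R : realType) (T : Type).
Implicit Types (phi psi : T -> R) (Phi : (T -> R) -> R).

Lemma linfty_comb (a : R) phi psi : linfty phi -> linfty psi -> linfty (a *: phi + psi).
Proof.
move=> [M phiM] [N psiN]; exists (`|a| * M + N) => l.
apply: le_trans (ler_normD _ _) _; rewrite normrM.
by apply: lerD => //; apply: ler_wpM2l.
Qed.

Lemma linfty_cst (c : R) : linfty (fun _ : T => c).
Proof. by exists `|c|. Qed.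

Lemma linfty_subspace : subspace_on (@linfty R T).
Proof. by split; [exact: linfty_cst|exact: linfty_comb]. Qed.

Lemma le_supnorm phi l : linfty phi -> `|phi l| <= supnorm phi.
Proof. by move=> [M phiM]; apply: ub_le_sup; [exists M => _ [k _ <-]|exists l]. Qed.

Definition linfty_positive Phi :=
  forall phi, linfty phi -> (forall l, 0 <= phi l) -> 0 <= Phi phi.

Lemma linfty_dual_pos0 : linfty_dual_pos (fun _ : T -> R => 0).
Proof.
split; first by move=> *; rewrite mulr0 addr0.
split=> // phi _ eps eps_gt0.
by exists 1 => // psi _ _; rewrite subrr normr0.
Qed.

Section Positive.
Variable Phi : (T -> R) -> R.
Hypotheses (Phi_lin : linear_on linfty Phi) (Phi_pos : linfty_positive Phi).

Lemma linfty_positive_le phi psi : linfty phi -> linfty psi ->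
  (forall l, phi l <= psi l) -> Phi phi <= Phi psi.
Proof.
move=> phi_bd psi_bd le_phi_psi.
rewrite -subr_ge0 -(linear_onB linfty_subspace) //.
apply: Phi_pos; first exact: (subspace_onB linfty_subspace psi_bd phi_bd).
by move=> l; rewrite subr_ge0.
Qed.

Lemma linfty_positive_norm phi : linfty phi ->
  `|Phi phi| <= supnorm phi * Phi (fun _ => 1).
Proof.
move=> phi_bd; set s := supnorm phi.
have Phi_s : Phi (fun _ => s) = s * Phi (fun _ => 1).
  rewrite -(linear_onZ linfty_subspace) //; last exact: linfty_cst.
  by congr Phi; apply: funext => l; rewrite -[RHS]/(s * 1) mulr1.
rewrite -Phi_s ler_norml; apply/andP; split.
- rewrite lerNl -(linear_onN linfty_subspace) //.
  apply: linfty_positive_le => [||l]; first exact: (subspace_onN linfty_subspace phi_bd).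
    exact: linfty_cst.
  rewrite -[(- phi) l]/(- phi l); apply: le_trans (ler_norm _) _.
  by rewrite normrN; exact: le_supnorm.
- apply: linfty_positive_le => [||l] //; first exact: linfty_cst.
  exact: le_trans (ler_norm _) (le_supnorm _ phi_bd).
Qed.

Lemma linfty_positive_dual_pos : linfty_dual_pos Phi.
Proof.
split=> //; split=> // phi phi_bd eps eps_gt0.
set k := Phi (fun _ => 1).
have k_ge0 : 0 <= k by apply: Phi_pos => //; exact: linfty_cst.
have k1_gt0 : 0 < k + 1 by lra.
exists (eps / (k + 1)) => [|psi psi_bd]; first exact: divr_gt0.
set delta := eps / (k + 1); set s := supnorm _ => s_lt.
have delta_eps : delta * k + delta = eps.
  by rewrite -[X in _ + X]mulr1 -mulrDr mulfVK ?gt_eqF.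
have sk_le : s * k <= delta * k by apply: ler_wpM2r => //; exact: ltW.
have delta_gt0 : 0 < delta by exact: divr_gt0.
rewrite -(linear_onB linfty_subspace) //.
apply: le_lt_trans (linfty_positive_norm _) _.
  exact: (subspace_onB linfty_subspace psi_bd phi_bd).
rewrite -/s -/k; lra.
Qed.

End Positive.
End LinftyFunctionals.

Section OptionExtension.
Variables (R : realType) (L : Type).

Definition extend0 (phi : L -> R) : option L -> R :=
  fun i => if i is Some l then phi l else 0.

Definition indicator_None : option L -> R := fun i => if i is None then 1 else 0.

Lemma linfty_extend0 phi : linfty phi -> linfty (extend0 phi).
Proof.
move=> [M phiM]; exists `|M| => -[l|] /=; last by rewrite normr0.
exact: le_trans (ler_norm M).
Qed.

Lemma linfty_indicator_None : linfty indicator_None.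
Proof. by exists 1 => -[l|] /=; rewrite ?normr0 ?normr1. Qed.

Lemma extend0_comb (a : R) phi psi :
  extend0 (a *: phi + psi) = a *: extend0 phi + extend0 psi.
Proof. by apply: funext => -[l|]; rewrite !fctE /= ?scaler0 ?addr0. Qed.

Lemma option_decomp (psi : option L -> R) :
  psi = psi None *: indicator_None + extend0 (fun l => psi (Some l)).
Proof. by apply: funext => -[l|]; rewrite !fctE /= ?scaler0 ?add0r ?scaler1 ?addr0. Qed.

Lemma linear_on_option_decomp (Lam : (option L -> R) -> R) psi :
  linear_on linfty Lam -> linfty psi ->
  Lam psi = psi None * Lam indicator_None + Lam (extend0 (fun l => psi (Some l))).
Proof.
move=> Lam_lin psi_bd; rewrite {1}(option_decomp psi) Lam_lin //.
  exact: linfty_indicator_None.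
by case: psi_bd => M psiM; apply: linfty_extend0; exists M.
Qed.

Lemma extend0_dual_pos (Lam : (option L -> R) -> R) (c : R) :
  linear_on linfty Lam -> linfty_positive Lam -> 0 < c ->
  linfty_dual_pos (fun phi => Lam (extend0 phi) / c).
Proof.
move=> Lam_lin Lam_pos c_gt0; apply: linfty_positive_dual_pos.
- move=> a phi psi phi_bd psi_bd /=.
  rewrite extend0_comb Lam_lin ?mulrDl ?mulrA //; exact: linfty_extend0.
- move=> phi phi_bd phi_ge0; apply: divr_ge0; last exact: ltW.
  by apply: Lam_pos; [exact: linfty_extend0|case].
Qed.

End OptionExtension.

Arguments indicator_None {R L}.

Section WeightedCombination.
Variables (R : realType) (I X : Type) (g : I -> X -> R).
Implicit Types (s : seq (R * X)) (phi : I -> R).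

Definition infsup : \bar R :=
  ereal_inf [set ereal_sup [set (g i x)%:E | i in [set: I]] | x in [set: X]].

Definition wcomb s i := \sum_(w <- s) w.1 * g i w.2.

Definition nonneg_weights s := all (fun w : R * X => 0 <= w.1) s.

Definition scale_weights (a : R) s := [seq (a * w.1, w.2) | w <- s].

Lemma wcomb_cat s1 s2 i : wcomb (s1 ++ s2) i = wcomb s1 i + wcomb s2 i.
Proof. by rewrite /wcomb big_cat. Qed.

Lemma wcomb_scale (a : R) s i : wcomb (scale_weights a s) i = a * wcomb s i.
Proof. by rewrite /wcomb big_map mulr_sumr; apply: eq_bigr => w _; rewrite mulrA. Qed.

Lemma nonneg_weights_scale (a : R) s : 0 <= a -> nonneg_weights s ->
  nonneg_weights (scale_weights a s).
Proof.
move=> a_ge0; rewrite /nonneg_weights all_map.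
by apply: sub_all => w; exact: mulr_ge0.
Qed.

Lemma weight_ge0 s : nonneg_weights s -> 0 <= \sum_(w <- s) w.1.
Proof.
elim: s => [|w s IH] /=; first by rewrite big_nil.
by case/andP => w_ge0 s_ge0; rewrite big_cons addr_ge0 ?IH.
Qed.

Lemma wcomb_weight0 s i : nonneg_weights s -> \sum_(w <- s) w.1 = 0 -> wcomb s i = 0.
Proof.
elim: s => [|w s IH] /=; first by rewrite /wcomb !big_nil.
case/andP => w_ge0 s_ge0; rewrite big_cons => sum0.
have := weight_ge0 s_ge0; move: sum0; set S := \sum_(_ <- s) _ => sum0 S_ge0.
have [w0 S0] : w.1 = 0 /\ S = 0 by split; lra.
by rewrite /wcomb big_cons -/(wcomb s i) IH // w0 mul0r add0r.
Qed.

Lemma infsup_convex_seq s : infsup_convex g -> nonneg_weights s ->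
  \sum_(w <- s) w.1 = 1 -> (infsup <= ereal_sup [set (wcomb s i)%:E | i in [set: I]])%E.
Proof.
case: s => [|d s'] g_convex; first by rewrite big_nil => _ /eqP; rewrite eq_sym oner_eq0.
set s := d :: s' => s_ge0 s_sum1.
have nth_ge0 (j : 'I_(size s)) : 0 <= (nth d s j).1 by exact: (all_nthP d s_ge0).
have nth_sum1 : \sum_(j < size s) (nth d s j).1 = 1.
  by rewrite -s_sum1 (big_nth d) big_mkord.
have nth_wcomb i : \sum_(j < size s) (nth d s j).1 * g i (nth d s j).2 = wcomb s i.
  by rewrite /wcomb (big_nth d) big_mkord.
have := g_convex (size s) _ (fun j => (nth d s j).2) isT nth_ge0 nth_sum1.
move=> /le_trans; apply; apply: ge_ereal_sup => _ [i _ <-].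
by rewrite nth_wcomb; apply: ereal_sup_ubound; exists i.
Qed.

Section Gauge.
Variable i0 : I.
Hypotheses (g_convex : infsup_convex g) (g_infsup_ge0 : (0 <= infsup)%E).

Lemma not_wcomb_le_neg s e : nonneg_weights s -> 0 < e -> ~ (forall i, wcomb s i <= - e).
Proof.
move=> s_ge0 e_gt0 s_le.
have := weight_ge0 s_ge0; rewrite le_eqVlt => /predU1P[/esym sum0|].
  by have := s_le i0; rewrite wcomb_weight0 //; lra.
set S := \sum_(_ <- s) _ => S_gt0.
have S'_ge0 : 0 <= S^-1 by rewrite invr_ge0 ltW.
have scaled_sum1 : \sum_(w <- scale_weights S^-1 s) w.1 = 1.
  by rewrite big_map -mulr_sumr mulVf ?gt_eqF.
have := infsup_convex_seq g_convex (nonneg_weights_scale S'_ge0 s_ge0) scaled_sum1.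
move=> /(le_trans g_infsup_ge0); apply/negP; rewrite -ltNge.
apply: (@le_lt_trans _ _ (- e / S)%:E).
  apply: ge_ereal_sup => _ [i _ <-].
  by rewrite lee_fin wcomb_scale mulrC ler_pM2r ?invr_gt0.
by rewrite lte_fin pmulr_llt0 ?invr_gt0 ?oppr_lt0.
Qed.

Let gauge_set phi :=
  [set r | exists2 s, nonneg_weights s & forall i, phi i + wcomb s i <= r].

(* [inf] is junk on empty or unbounded sets; for bounded [phi] the set is
   nonempty and, by [not_wcomb_le_neg], bounded below. *)
Definition gauge phi := inf (gauge_set phi).

Let gauge_set_neq0 phi : linfty phi -> gauge_set phi !=set0.
Proof.
case=> M phiM; exists M, [::] => // i.
by rewrite /wcomb big_nil addr0; exact: le_trans (ler_norm _) (phiM i).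
Qed.

Let gauge_set_lb phi : linfty phi -> has_lbound (gauge_set phi).
Proof.
case=> M phiM; exists (- M) => r [s s_ge0 s_le]; rewrite leNgt; apply/negP => r_lt.
apply: (not_wcomb_le_neg (e := - M - r) s_ge0); first lra.
by move=> i; have := s_le i; have := phiM i; rewrite ler_norml => /andP[]; lra.
Qed.

Lemma gauge_le phi s r : linfty phi -> nonneg_weights s ->
  (forall i, phi i + wcomb s i <= r) -> gauge phi <= r.
Proof. by move=> phi_bd s_ge0 le_r; apply: ge_inf (gauge_set_lb phi_bd) _ _; exists s. Qed.

Lemma gauge_sublinear : sublinear_on linfty gauge.
Proof.
have lin := @linfty_subspace R I.
split.
- apply: (gauge_le (s := [::])) => [|//|i]; first exact: lin.1.
  by rewrite /wcomb big_nil addr0.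
- move=> phi psi phi_bd psi_bd.
  apply: (inf_le_inf_add (gauge_set_neq0 phi_bd) (gauge_set_neq0 psi_bd)).
  move=> r1 r2 [s1 s1_ge0 s1_le] [s2 s2_ge0 s2_le].
  apply: (gauge_le (s := s1 ++ s2)); first exact: (subspace_onD lin phi_bd psi_bd).
    by rewrite /nonneg_weights all_cat; apply/andP.
  move=> i; rewrite wcomb_cat -[(phi + psi) i]/(phi i + psi i).
  by have := s1_le i; have := s2_le i; lra.
- move=> a phi a_gt0 phi_bd; apply: (inf_le_inf_scale a_gt0 (gauge_set_neq0 phi_bd)).
  move=> r [s s_ge0 s_le]; apply: (gauge_le (s := scale_weights a s)).
  + exact: (subspace_onZ lin a phi_bd).
  + exact: nonneg_weights_scale (ltW a_gt0) s_ge0.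
  + by move=> i; rewrite wcomb_scale -[(a *: phi) i]/(a * phi i) -mulrDr ler_pM2l.
Qed.

Theorem infsup_convex_mean : (forall x, linfty (fun i => g i x)) ->
  exists Lam : (I -> R) -> R, [/\ linear_on linfty Lam, linfty_positive Lam,
    Lam (fun _ => 1) = 1 & forall x, 0 <= Lam (fun i => g i x)].
Proof.
move=> g_bd; have lin := @linfty_subspace R I.
have [Lam [Lam_lin Lam_gauge]] := sublinear_dominated_linear lin gauge_sublinear.
have Lam_le phi r : linfty phi -> (forall i, phi i <= r) -> Lam phi <= r.
  move=> phi_bd phi_le; apply: le_trans (Lam_gauge _ phi_bd) _.
  by apply: (gauge_le (s := [::])) => // i; rewrite /wcomb big_nil addr0.
have Lam_ge phi r : linfty phi -> (forall i, r <= phi i) -> r <= Lam phi.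
  move=> phi_bd le_phi; rewrite -[Lam phi]opprK -(linear_onN lin) // lerNr.
  apply: Lam_le => [|i]; first exact: (subspace_onN lin phi_bd).
  by rewrite -[(- phi) i]/(- phi i) lerN2.
exists Lam; split => //.
- by move=> phi phi_bd; exact: Lam_ge.
- by apply/le_anti/andP; split; [apply: Lam_le|apply: Lam_ge] => //; exact: linfty_cst.
- move=> x; rewrite -[Lam _]opprK -(linear_onN lin) ?oppr_ge0 //.
  apply: le_trans (Lam_gauge _ (subspace_onN lin (g_bd x))) _.
  apply: (gauge_le (s := [:: (1, x)])) => //=; first exact: (subspace_onN lin (g_bd x)).
    by rewrite ler01.
  by move=> i; rewrite /wcomb big_seq1 mul1r -[(- _) i]/(- g i x) addNr.
Qed.

End Gauge.
End WeightedCombination.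

Section ErealSupImage.
Variables (R : realType) (T : Type) (h : T -> R).

Lemma ereal_sup_image_le (r : R) :
  (ereal_sup [set (h t)%:E | t in [set: T]] <= r%:E)%E <-> forall t, h t <= r.
Proof.
split=> [sup_le t|h_le].
  by rewrite -lee_fin; apply: le_trans sup_le; apply: ereal_sup_ubound; exists t.
by apply: ge_ereal_sup => _ [t _ <-]; rewrite lee_fin.
Qed.

Lemma ereal_sup_image_lt (r0 : R) :
  (ereal_sup [set (h t)%:E | t in [set: T]] < r0%:E)%E ->
  exists2 r, r < r0 & forall t, h t <= r.
Proof.
have h_le t : ((h t)%:E <= ereal_sup [set (h t)%:E | t in [set: T]])%E.
  by apply: ereal_sup_ubound; exists t.
move: h_le; case: (ereal_sup _) => [r| |] // h_le; first by rewrite lte_fin; exists r.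
by move=> _; exists (r0 - 1) => [|t]; [lra|have := h_le t].
Qed.

End ErealSupImage.

Section Lagrange.
Variables (R : realType) (X L : Type) (f : X -> R) (F : L -> X -> R) (x0 : X).
Hypothesis F_bd : forall x, linfty (fun l => F l x).
Hypothesis x0_feasible : forall l, F l x0 <= 0.

Local Notation G := (add_obj F f x0).

Definition lagrange_multiplier (Phi0 : (L -> R) -> R) :=
  linfty_dual_pos Phi0 /\ forall x, f x0 <= lagrangian f F x Phi0.

Lemma linfty_add_obj x : linfty (fun i => G i x).
Proof.
case: (F_bd x) => M FM; exists (`|M| + `|f x - f x0|) => -[l|] /=.
  by apply: le_trans (FM l) _; rewrite ler_wpDr // (le_trans (ler_norm M)).
by rewrite lerDr.
Qed.

Lemma linfty_dual_pos_feasible_le0 Phi :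
  linfty_dual_pos Phi -> Phi (fun l => F l x0) <= 0.
Proof.
case=> Phi_lin [_ Phi_pos]; have lin := @linfty_subspace R L.
rewrite -(linear_on0 lin Phi_lin); apply: linfty_positive_le => //; first exact: lin.1.
Qed.

Lemma saddle_point_lagrange_multiplier Phi0 :
  linfty_dual_pos Phi0 -> saddle_point f F x0 Phi0 -> lagrange_multiplier Phi0.
Proof.
move=> Phi0_dual saddle; split => // x.
have [+ _] := saddle x0 _ (@linfty_dual_pos0 R L); have [_ +] := saddle x _ Phi0_dual.
rewrite /lagrangian; lra.
Qed.

Lemma lagrange_multiplier_saddle_point Phi0 :
  lagrange_multiplier Phi0 -> saddle_point f F x0 Phi0.
Proof.
move=> [Phi0_dual Phi0_le] x Phi Phi_dual.
have := Phi0_le x; have := Phi0_le x0; rewrite /lagrangian.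
have := linfty_dual_pos_feasible_le0 Phi_dual.
have := linfty_dual_pos_feasible_le0 Phi0_dual.
by split; lra.
Qed.

Lemma add_obj_infsup_le0 : (infsup G <= 0)%E.
Proof.
apply: (@le_trans _ _ (ereal_sup [set (G i x0)%:E | i in [set: option L]])).
  by apply: ereal_inf_lbound; exists x0.
by apply/ereal_sup_image_le => -[l|] /=; rewrite ?x0_feasible ?subrr.
Qed.

(* A convex combination with negative supremum would make the weighted sum
   sum_j t_j (f (x_j) + Phi0 (F x_j) - f x0) negative. *)
Lemma lagrange_multiplier_infsup_convex Phi0 :
  lagrange_multiplier Phi0 -> infsup_convex G.
Proof.
move=> [[Phi0_lin [_ Phi0_pos]] Phi0_le] m t xs _ t_ge0 _.
have lin := @linfty_subspace R L.
apply: le_trans add_obj_infsup_le0 _; rewrite leNgt; apply/negP => /ereal_sup_image_lt.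
move=> [r r_lt0 comb_le].
pose h := \sum_(j < m) t j *: (fun l => F l (xs j)).
have Phi0_h : Phi0 h = \sum_(j < m) t j * Phi0 (fun l => F l (xs j)).
  exact: (linear_on_sum lin Phi0_lin).
have Phi0_h_le0 : Phi0 h <= 0.
  rewrite -(linear_on0 lin Phi0_lin); apply: linfty_positive_le => //.
  - exact: (subspace_on_sum lin).
  - exact: lin.1.
  - move=> l; rewrite /h fct_sumE; apply: le_trans (ltW r_lt0).
    exact: (comb_le (Some l)).
have obj_lt0 : \sum_(j < m) t j * (f (xs j) - f x0) < 0.
  exact: le_lt_trans (comb_le None) r_lt0.
have : 0 <= \sum_(j < m) t j * (f (xs j) + Phi0 (fun l => F l (xs j)) - f x0).
  by apply: sumr_ge0 => j _; rewrite mulr_ge0 // subr_ge0; exact: Phi0_le.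
have -> : \sum_(j < m) t j * (f (xs j) + Phi0 (fun l => F l (xs j)) - f x0) =
    \sum_(j < m) t j * (f (xs j) - f x0) + Phi0 h.
  by rewrite Phi0_h -big_split; apply: eq_bigr => j _ /=; ring.
lra.
Qed.

Section Converse.
Hypothesis x0_optimal : forall x, (forall l, F l x <= 0) -> f x0 <= f x.
Hypothesis slater : exists x1 r, r < 0 /\ forall l, F l x1 <= r.

Lemma add_obj_infsup_ge0 : (0 <= infsup G)%E.
Proof.
apply/ereal_infP => _ [x _ <-].
have [x_feasible|/existsNP[l /negP]] := pselect (forall l, F l x <= 0).
  apply: le_trans (_ : ((G None x)%:E <= _)%E); last by apply: ereal_sup_ubound; exists None.
  by rewrite lee_fin subr_ge0 x0_optimal.
rewrite -ltNge => Fl_gt0.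
apply: le_trans (_ : ((G (Some l) x)%:E <= _)%E).
  by rewrite lee_fin ltW.
by apply: ereal_sup_ubound; exists (Some l).
Qed.

(* If [Lam] gave no weight to the objective, it would be a mean of the constraints,
   and Slater's point would make it negative on [G x1]. *)
Lemma slater_indicator_None_gt0 (Lam : (option L -> R) -> R) :
  linear_on linfty Lam -> linfty_positive Lam -> Lam (fun _ => 1) = 1 ->
  (forall x, 0 <= Lam (fun i => G i x)) -> 0 < Lam indicator_None.
Proof.
move=> Lam_lin Lam_pos Lam1 Lam_G.
have [x1 [r [r_lt0 F_le_r]]] := slater.
have lin := @linfty_subspace R (option L).
have one_bd := linfty_cst L (1 : R).
have c_ge0 : 0 <= Lam indicator_None.
  by apply: Lam_pos; [exact: linfty_indicator_None|case=> //= _; exact: ler01].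
rewrite lt_def c_ge0 andbT; apply/eqP => c0.
have ext1 : Lam (extend0 (fun _ => 1)) = 1.
  have := linear_on_option_decomp Lam_lin (linfty_cst _ 1).
  by rewrite Lam1 c0 mulr0 add0r => /esym.
have : Lam (fun i => G i x1) <= r.
  rewrite (linear_on_option_decomp Lam_lin (linfty_add_obj x1)) c0 mulr0 add0r /=.
  rewrite -[r]mulr1 -ext1 -(linear_onZ lin Lam_lin); last exact: linfty_extend0.
  apply: linfty_positive_le => //; first exact: linfty_extend0.
    exact: (subspace_onZ lin r (linfty_extend0 one_bd)).
  by case=> [l|]; rewrite -?[(r *: _) _]/(r * extend0 _ _) /= ?mulr1 ?mulr0.
by have := Lam_G x1; lra.
Qed.

Lemma infsup_convex_lagrange_multiplier :
  infsup_convex G -> exists Phi0, lagrange_multiplier Phi0.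
Proof.
move=> G_convex.
have [Lam [Lam_lin Lam_pos Lam1 Lam_G]] :=
  infsup_convex_mean None G_convex add_obj_infsup_ge0 linfty_add_obj.
have c_gt0 := slater_indicator_None_gt0 Lam_lin Lam_pos Lam1 Lam_G.
exists (fun phi => Lam (extend0 phi) / Lam indicator_None); split.
  exact: extend0_dual_pos.
move=> x; have := Lam_G x.
rewrite (linear_on_option_decomp Lam_lin (linfty_add_obj x)) /lagrangian /= => Lam_Gx.
rewrite -(ler_pM2r c_gt0) mulrDl divfK ?gt_eqF //; lra.
Qed.

End Converse.
End Lagrange.

Theorem theorem4p2 (R : realType) (X L : Type) (xi : X) (li : L)
  (f : X -> R) (F : L -> X -> R)
  (hbd : forall x : X, linfty (fun l => F l x))
  (x0 : X)
  (hfeas : (ereal_sup [set (F l x0)%:E | l in [set: L]] <= 0)%E)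
  (hopt : (f x0)%:E = ereal_inf [set (f x)%:E | x in
            [set x : X | (ereal_sup [set (F l x)%:E | l in [set: L]] <= 0)%E]])
  (hslater : exists x1 : X, (ereal_sup [set (F l x1)%:E | l in [set: L]] < 0)%E) :
  (exists Phi0 : (L -> R) -> R, linfty_dual_pos Phi0 /\ saddle_point f F x0 Phi0)
  <-> infsup_convex (add_obj F f x0).
Proof.
have x0_feasible : forall l, F l x0 <= 0 by apply/ereal_sup_image_le.
have x0_optimal x : (forall l, F l x <= 0) -> f x0 <= f x.
  move=> /ereal_sup_image_le x_feasible.
  by rewrite -lee_fin hopt; apply: ereal_inf_lbound; exists x.
have slater : exists x1 r, r < 0 /\ forall l, F l x1 <= r.
  by have [x1 /ereal_sup_image_lt [r r_lt0 F_le]] := hslater; exists x1, r.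
split=> [[Phi0 [Phi0_dual saddle]]|G_convex].
  apply: (lagrange_multiplier_infsup_convex hbd x0_feasible (Phi0 := Phi0)).
  exact: saddle_point_lagrange_multiplier.
have [Phi0 Phi0_mult] :=
  infsup_convex_lagrange_multiplier hbd x0_optimal slater G_convex.
by exists Phi0; split; [case: Phi0_mult|exact: lagrange_multiplier_saddle_point].
Qed.
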